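(* Let $(\varepsilon,\delta)\in\{-1,0,1\}^2$ and $\phi=(\phi_1,\phi_2,\phi_3)\in I_\delta^3$. Define $u_i=-\int_{r_i}^\infty\frac{dt}{\tau_{\varepsilon\delta}(t)}$ for $i=1,2,3$. Then the image $u(\mathcal{M}_{\varepsilon,\delta}(\phi_1,\phi_2,\phi_3))\subset\mathbb{R}^3$ is an open convex polyhedron in each of the following cases: (i) $\varepsilon=-1$; (ii) $(\varepsilon,\delta)=(1,1)$ and $\phi_i\in[\pi/2,\pi]$ for $i=1,2,3$.
   Context: Generalized hyperbolic triangles (in $\mathbb{H}^2$) are convex regions bounded by three geodesics (forming a Euclidean triangle in the Klein model) truncated by common perpendiculars at vertices outside $\overline{\mathbb{H}^2}$, with horodisks at ideal vertices; a generalized vertex has type $1$ (in $\mathbb{H}^2$), $0$ (ideal) or $-1$ (hyperideal). Generalized angle: interior angle (type 1), twice the horocyclic arc length between the sides (type 0), distance between the two sides (type $-1$). Generalized edge length between generalized vertices $u,v$: with $B_u$ the point, the horodisk, or the half-plane beyond the truncating perpendicular, it is $d(B_u,B_v)$ if these are disjoint and minus the distance between the points where $\partial B_u,\partial B_v$ meet the side otherwise. $I_\delta=\mathbb{R}_{>0}$ for $\delta\in\{0,-1\}$, $(0,\pi]$ for $\delta=1$; $J_\sigma=\mathbb{R}_{>0}$ for $\sigma=\pm1$, $J_0=\mathbb{R}$; $\tau_s(t)=\frac12e^t-\frac12se^{-t}$. For $r_i,r_j\in J_{\varepsilon\delta}$ and $\phi_k\in I_\delta$, $l_k$ denotes the generalized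 length of the third side of a generalized triangle of type $(\varepsilon,\varepsilon,\delta)$ whose two sides at the type-$\delta$ vertex have lengths $r_i,r_j$ and generalized angle $\phi_k$ between them, when such a triangle exists (when $\delta=1,\phi_k=\pi$, $l_k=r_i+r_j$). $\mathcal{M}_{\varepsilon,\delta}(\phi_1,\phi_2,\phi_3)$ is the set of $(r_1,r_2,r_3)\in(J_{\varepsilon\delta})^3$ such that $l_1,l_2,l_3$ are all defined (for $\{i,j,k\}=\{1,2,3\}$, using $r_i,r_j,\phi_k$) and there exists a generalized triangle of type $(\varepsilon,\varepsilon,\varepsilon)$ with edge lengths $l_1,l_2,l_3$. *)

From Stdlib Require Export Reals List.
Open Scope R_scope.

Record V3 := mkV { vx : R; vy : R; vz : R }.

Definition mink (a b : V3) : R := vx a * vx b + vy a * vy b - vz a * vz b.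
Definition vadd (a b : V3) : V3 := mkV (vx a + vx b) (vy a + vy b) (vz a + vz b).
Definition vscal (c : R) (a : V3) : V3 := mkV (c * vx a) (c * vy a) (c * vz a).
Definition vsub (a b : V3) : V3 := vadd a (vscal (-1) b).
Definition det3 (a b c : V3) : R :=
  vx a * (vy b * vz c - vz b * vy c)
  - vy a * (vx b * vz c - vz b * vx c)
  + vz a * (vx b * vy c - vy b * vx c).
Definition dot3 (a b : V3) : R := vx a * vx b + vy a * vy b + vz a * vz b.

Definition tau (s t : R) : R := / 2 * exp t - / 2 * s * exp (- t).

(* vertex types: 1 = point of H^2, 0 = ideal, -1 = hyperideal *)
Definition is_type (e : R) : Prop := e = -1 \/ e = 0 \/ e = 1.

(* Normalized representative of a generalized vertex of type e:
   e = 1 : point of the upper sheet  <v,v> = -1, vz > 0;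
   e = 0 : future light-like vector v; its horodisk is
           B_v = {x in H^2 | -<x,v> <= 1/2};
   e = -1: unit space-like v with vz > 0 (Klein point [v] outside the disk);
           truncating line v^perp, half-plane B_v = {x | <x,v> >= 0}
           (the side containing the hyperideal vertex [v]). *)
Definition normed (e : R) (v : V3) : Prop := mink v v = - e /\ 0 < vz v.

(* the open Klein segment between [v] and [w] meets the open disk *)
Definition edge_ok (v w : V3) : Prop :=
  exists a b, 0 < a /\ 0 < b /\
    mink (vadd (vscal a v) (vscal b w)) (vadd (vscal a v) (vscal b w)) < 0.

(* a point vertex is not cut off by the truncation at a hyperideal vertex *)
Definition trunc_ok (e : R) (v : V3) (e' : R) (w : V3) : Prop :=
  e = -1 -> e' = 1 -> mink v w < 0.

Definition gtri (e1 e2 e3 : R) (v1 v2 v3 : V3) : Prop :=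
  is_type e1 /\ is_type e2 /\ is_type e3 /\
  normed e1 v1 /\ normed e2 v2 /\ normed e3 v3 /\
  det3 v1 v2 v3 <> 0 /\
  edge_ok v1 v2 /\ edge_ok v1 v3 /\ edge_ok v2 v3 /\
  trunc_ok e1 v1 e2 v2 /\ trunc_ok e2 v2 e1 v1 /\
  trunc_ok e1 v1 e3 v3 /\ trunc_ok e3 v3 e1 v1 /\
  trunc_ok e2 v2 e3 v3 /\ trunc_ok e3 v3 e2 v2.

Definition gen_len (a b : R) (v w : V3) (l : R) : Prop :=
  (a * b = 1 -> 0 <= l) /\ tau (- (a * b)) l = - mink v w.

Definition gen_angle (d : R) (vk vi vj : V3) (phi : R) : Prop :=
  (d = 1 ->
     (* interior angle between the tangent directions toward vi, vj *)
     let ui := vadd vi (vscal (mink vi vk) vk) in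
     let uj := vadd vj (vscal (mink vj vk) vk) in
     0 <= phi <= PI /\ cos phi * sqrt (mink ui ui * mink uj uj) = mink ui uj) /\
  (d = 0 ->
     (* twice the horocyclic arc length on the horocycle <x,vk> = -1/2
        between its intersection points hi, hj with the two sides *)
     exists ai bi aj bj,
       let hi := vadd (vscal ai vk) (vscal bi vi) in
       let hj := vadd (vscal aj vk) (vscal bj vj) in
       mink hi hi = -1 /\ 0 < vz hi /\ mink hi vk = - / 2 /\
       mink hj hj = -1 /\ 0 < vz hj /\ mink hj vk = - / 2 /\
       phi = 2 * sqrt (mink (vsub hi hj) (vsub hi hj))) /\
  (d = -1 ->
     (* distance along the truncating line vk^perp between the two sides *)
     exists ai bi aj bj,
       let fi := vadd (vscal ai vk) (vscal bi vi) in
       let fj := vadd (vscal aj vk) (vscal bj vj) in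
       mink fi fi = -1 /\ 0 < vz fi /\ mink fi vk = 0 /\
       mink fj fj = -1 /\ 0 < vz fj /\ mink fj vk = 0 /\
       0 <= phi /\ cosh phi = - mink fi fj).

Definition inI (d phi : R) : Prop := 0 < phi /\ (d = 1 -> phi <= PI).
Definition inJ (s r : R) : Prop := s <> 0 -> 0 < r.

Definition third_len (eps delta ri rj phi l : R) : Prop :=
  (delta = 1 /\ phi = PI /\ l = ri + rj) \/
  exists a b c : V3,
    gtri eps eps delta a b c /\
    gen_len eps delta a c ri /\ gen_len eps delta b c rj /\
    gen_angle delta c a b phi /\ gen_len eps eps a b l.

Definition Mset (eps delta phi1 phi2 phi3 r1 r2 r3 : R) : Prop :=
  inJ (eps * delta) r1 /\ inJ (eps * delta) r2 /\ inJ (eps * delta) r3 /\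
  exists l1 l2 l3,
    third_len eps delta r2 r3 phi1 l1 /\
    third_len eps delta r1 r3 phi2 l2 /\
    third_len eps delta r1 r2 phi3 l3 /\
    exists v1 v2 v3 : V3,
      gtri eps eps eps v1 v2 v3 /\
      gen_len eps eps v2 v3 l1 /\ gen_len eps eps v1 v3 l2 /\ gen_len eps eps v1 v2 l3.

Definition improper_int (f : R -> R) (a L : R) : Prop :=
  (forall b, a <= b -> inhabited (Riemann_integrable f a b)) /\
  forall eta, 0 < eta -> exists B, forall b (pr : Riemann_integrable f a b),
    B <= b -> Rabs (RiemannInt pr - L) < eta.

Definition u_coord (eps delta r y : R) : Prop :=
  improper_int (fun t => / tau (eps * delta) t) r (- y).

Definition u_image (eps delta phi1 phi2 phi3 : R) (y : V3) : Prop :=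
  exists r1 r2 r3, Mset eps delta phi1 phi2 phi3 r1 r2 r3 /\
    u_coord eps delta r1 (vx y) /\ u_coord eps delta r2 (vy y) /\
    u_coord eps delta r3 (vz y).

Definition open_convex_polyhedron (S : V3 -> Prop) : Prop :=
  exists hs : list (V3 * R),
    forall y, S y <-> Forall (fun h => dot3 (fst h) y < snd h) hs.

(* For eps = -1, a corner of type (eps, eps, delta) with legs ri, rj and angle phi has a
   third side exactly when a law-of-cosines expression exceeds 1.  Under the substitution
   u = - int_r^oo dt / tau this condition becomes linear, u_i + u_j > - phi: for
   delta = -1, 0, 1 the quantity - u is ln coth (r/2), 2 e^-r and the angle of parallelism
   of r, the variables in which the law of cosines reads phi > (- u_i) + (- u_j).  Three
   hyperideal vertices bound a generalized triangle whatever the three lengths, so M is cut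
   out by these three conditions alone, and u(M) is the intersection of the half-spaces
   u_i + u_j > - phi_k with the range of u (u_i < 0, and also u_i > - pi/2 when delta = 1).
   For eps = delta = 1 and obtuse angles the third side always exists, is longer than both
   legs and at most their sum; so the three third sides satisfy the triangle inequalities,
   M is the whole octant and u(M) is the open negative octant. *)

From Stdlib Require Import Reals List Lra Psatz.
From Coquelicot Require Import Coquelicot.
Open Scope R_scope.
Set Bullet Behavior "Strict Subproofs".

Lemma sqrt_spec x : 0 < x -> 0 < sqrt x /\ sqrt x * sqrt x = x.
Proof. intros h. split; [apply sqrt_lt_R0|apply sqrt_sqrt]; lra. Qed.

Lemma exp_gt_1 x : 0 < x -> 1 < exp x.
Proof. intros h. rewrite <- exp_0. apply exp_increasing. exact h. Qed.

Lemma exp_opp_lt_1 x : 0 < x -> exp (- x) < 1.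
Proof. intros h. rewrite <- exp_0. apply exp_increasing. lra. Qed.

Lemma cosh_sinh_sq x : cosh x * cosh x - sinh x * sinh x = 1.
Proof. unfold cosh, sinh. rewrite exp_Ropp. pose proof (exp_pos x). field. lra. Qed.

Lemma cosh_plus x y : cosh (x + y) = cosh x * cosh y + sinh x * sinh y.
Proof. unfold cosh, sinh. rewrite Ropp_plus_distr, !exp_plus. field. Qed.

Lemma cosh_minus x y : cosh (x - y) = cosh x * cosh y - sinh x * sinh y.
Proof. unfold cosh, sinh, Rminus. rewrite Ropp_plus_distr, Ropp_involutive, !exp_plus. field. Qed.

Lemma sinh_minus x y : sinh (x - y) = sinh x * cosh y - cosh x * sinh y.
Proof. unfold cosh, sinh, Rminus. rewrite Ropp_plus_distr, Ropp_involutive, !exp_plus. field. Qed.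

Lemma sinh_pos x : 0 < x -> 0 < sinh x.
Proof. intros hx. unfold sinh. pose proof (exp_increasing (- x) x ltac:(lra)). lra. Qed.

Lemma cosh_pos x : 0 < cosh x.
Proof. unfold cosh. pose proof (exp_pos x). pose proof (exp_pos (- x)). lra. Qed.

Lemma cosh_gt_1 x : 0 < x -> 1 < cosh x.
Proof.
  intros hx. pose proof (cosh_sinh_sq x). pose proof (sinh_pos x hx). pose proof (cosh_pos x).
  nra.
Qed.

Lemma cosh_lt x y : 0 <= x -> x < y -> cosh x < cosh y.
Proof.
  intros hx hxy. replace y with (x + (y - x)) by ring. rewrite cosh_plus.
  pose proof (cosh_gt_1 (y - x) ltac:(lra)). pose proof (sinh_pos (y - x) ltac:(lra)).
  pose proof (cosh_pos x).
  assert (0 <= sinh x) by (destruct hx as [hx|<-]; [apply Rlt_le, sinh_pos|rewrite sinh_0]; lra).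
  nra.
Qed.

Lemma cosh_lt_inv x y : 0 <= y -> cosh x < cosh y -> x < y.
Proof.
  intros hy h. destruct (Rlt_or_le x y) as [|[hyx|<-]]; [easy| |lra].
  pose proof (cosh_lt y x hy hyx). lra.
Qed.

Lemma cosh_le_inv x y : 0 <= y -> cosh x <= cosh y -> x <= y.
Proof.
  intros hy h. destruct (Rle_or_lt x y) as [|hyx]; [easy|].
  pose proof (cosh_lt y x hy hyx). lra.
Qed.

Lemma cosh_surj x : 1 < x -> exists l, 0 < l /\ cosh l = x.
Proof.
  intros hx. set (q := sqrt (x * x - 1)).
  assert (hq : 0 < q) by (apply sqrt_lt_R0; nra).
  assert (hq2 : q * q = x * x - 1) by (apply sqrt_sqrt; nra).
  exists (ln (x + q)). split.
  - rewrite <- ln_1. apply ln_increasing; lra.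
  - unfold cosh. rewrite exp_Ropp, exp_ln by lra.
    apply (Rmult_eq_reg_r (2 * (x + q))); [|lra]. field_simplify; nra.
Qed.

Lemma tau_sinh t : tau 1 t = sinh t.
Proof. unfold tau, sinh. field. Qed.

Lemma tau_exp t : tau 0 t = exp t / 2.
Proof. unfold tau. field. Qed.

Lemma tau_cosh t : tau (-1) t = cosh t.
Proof. unfold tau, cosh. field. Qed.

(** * Improper integrals *)

Definition vanishes_at_infinity (G : R -> R) : Prop :=
  forall eta, 0 < eta -> exists B, forall b, B <= b -> Rabs (G b) < eta.

Lemma improper_int_unique f a L1 L2 :
  improper_int f a L1 -> improper_int f a L2 -> L1 = L2.
Proof.
  intros [Hint H1] [_ H2].
  destruct (Req_dec L1 L2) as [e|ne]; [exact e|exfalso].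
  assert (Hd : 0 < Rabs (L1 - L2) / 2).
  { assert (0 < Rabs (L1 - L2)) by (apply Rabs_pos_lt; lra). lra. }
  destruct (H1 _ Hd) as [B1 HB1], (H2 _ Hd) as [B2 HB2].
  set (b := Rmax a (Rmax B1 B2)).
  destruct (Hint b (Rmax_l _ _)) as [pr].
  specialize (HB1 b pr (Rle_trans _ _ _ (Rmax_l _ _) (Rmax_r a _))).
  specialize (HB2 b pr (Rle_trans _ _ _ (Rmax_r _ _) (Rmax_r a _))).
  assert (Rabs (L1 - L2) <= Rabs (RiemannInt pr - L1) + Rabs (RiemannInt pr - L2)).
  { replace (L1 - L2) with (- (RiemannInt pr - L1) + (RiemannInt pr - L2)) by ring.
    rewrite <- (Rabs_Ropp (RiemannInt pr - L1)). apply Rabs_triang. }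
  lra.
Qed.

Lemma improper_int_of_antiderivative f F a L :
  (forall x, a <= x -> is_derive F x (f x)) ->
  (forall x, a <= x -> continuous f x) ->
  vanishes_at_infinity (fun b => F b - L) ->
  improper_int f a (L - F a).
Proof.
  intros Hder Hcont Hlim.
  assert (HI : forall b, a <= b -> is_RInt f a b (F b - F a)).
  { intros b hb. apply (is_RInt_derive F f a b); intros x hx;
      rewrite Rmin_left in hx by lra; [apply Hder | apply Hcont]; lra. }
  split.
  - intros b hb. constructor. apply ex_RInt_Reals_0. eexists. exact (HI b hb).
  - intros eta he. destruct (Hlim eta he) as [B HB]. exists (Rmax a B).
    intros b pr hb.
    rewrite <- RInt_Reals, (is_RInt_unique f a b _ (HI b (Rle_trans _ _ _ (Rmax_l _ _) hb))).
    replace (F b - F a - (L - F a)) with (F b - L) by ring.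
    exact (HB b (Rle_trans _ _ _ (Rmax_r _ _) hb)).
Qed.

Lemma improper_int_primitive_iff f G r y :
  (forall x, r <= x -> is_derive G x (f x)) ->
  (forall x, r <= x -> continuous f x) ->
  vanishes_at_infinity G ->
  improper_int f r (- y) <-> y = G r.
Proof.
  intros Hder Hcont Hlim.
  assert (HG : improper_int f r (0 - G r)).
  { apply improper_int_of_antiderivative; [exact Hder|exact Hcont|].
    intros eta he. destruct (Hlim eta he) as [B HB]. exists B.
    intros b hb. rewrite Rminus_0_r. exact (HB b hb). }
  split.
  - intros H. pose proof (improper_int_unique _ _ _ _ H HG). lra.
  - intros ->. replace (- G r) with (0 - G r) by ring. exact HG.
Qed.

Lemma continuous_inv_tau s t : tau s t <> 0 -> continuous (fun x => / tau s x) t.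
Proof.
  intros h. apply (ex_derive_continuous (fun x => / tau s x)).
  unfold tau in *. auto_derive. exact h.
Qed.

(** * The coordinates [u] *)

Definition tanh_half r := (exp r - 1) / (exp r + 1).

Definition parallel_angle r := 2 * atan (exp (- r)).

(* Closed forms of [u] when [tau] is [sinh], [exp / 2] and [cosh]. *)
Definition u_sinh r := ln (tanh_half r).
Definition u_exp r := - 2 * exp (- r).
Definition u_cosh r := - parallel_angle r.

Lemma tanh_half_bounds r : 0 < r -> 0 < tanh_half r < 1.
Proof.
  intros h. pose proof (exp_gt_1 r h). unfold tanh_half. split.
  - apply Rdiv_lt_0_compat; lra.
  - apply (Rmult_lt_reg_r (exp r + 1)); [lra|]. field_simplify; lra.
Qed.

Lemma sinh_tanh_half r : 0 < r ->
  sinh r = 2 * tanh_half r / (1 - tanh_half r * tanh_half r).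
Proof.
  intros h. pose proof (exp_gt_1 r h). unfold sinh, tanh_half. rewrite exp_Ropp.
  field. repeat split; nra.
Qed.

Lemma cosh_tanh_half r : 0 < r ->
  cosh r = (1 + tanh_half r * tanh_half r) / (1 - tanh_half r * tanh_half r).
Proof.
  intros h. pose proof (exp_gt_1 r h). unfold cosh, tanh_half. rewrite exp_Ropp.
  field. repeat split; nra.
Qed.

Lemma parallel_angle_bounds r : 0 < r -> 0 < parallel_angle r < PI / 2.
Proof.
  intros hr. unfold parallel_angle.
  pose proof (exp_pos (- r)). pose proof (exp_opp_lt_1 r hr).
  assert (atan 0 < atan (exp (- r))) by (apply atan_increasing; lra).
  assert (atan (exp (- r)) < atan 1) by (apply atan_increasing; lra).
  rewrite atan_0 in *. rewrite atan_1 in *. lra.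
Qed.

Lemma parallel_angle_cosh r :
  cos (parallel_angle r) * cosh r = sinh r /\ sin (parallel_angle r) * cosh r = 1.
Proof.
  unfold parallel_angle. set (x := exp (- r)).
  assert (hx : 0 < x) by apply exp_pos.
  assert (ex : exp r = / x) by (unfold x; rewrite exp_Ropp, Rinv_inv; reflexivity).
  assert (hq : sqrt (1 + x²) ^ 2 = 1 + x²)
    by (rewrite <- Rsqr_pow2; apply Rsqr_sqrt; pose proof (Rle_0_sqr x); lra).
  assert (0 < sqrt (1 + x²)) by (apply sqrt_lt_R0; pose proof (Rle_0_sqr x); lra).
  unfold cosh, sinh. rewrite cos_2a, sin_2a, cos_atan, sin_atan, ex. fold x.
  unfold Rsqr in *. split; field_simplify; try lra; rewrite hq; field; nra.
Qed.

Lemma u_sinh_vanishes : vanishes_at_infinity u_sinh.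
Proof.
  intros eta he. assert (h2 : 0 < 2 / eta) by (apply Rdiv_lt_0_compat; lra).
  exists (ln (1 + 2 / eta) + 1). intros b hb.
  assert (hE : 1 + 2 / eta < exp b).
  { rewrite <- (exp_ln (1 + 2 / eta)) by lra. apply exp_increasing. lra. }
  set (E := exp b) in *.
  assert (hp : 0 < 2 / (E - 1)) by (apply Rdiv_lt_0_compat; lra).
  assert (hq : (E - 1) / (E + 1) = / (1 + 2 / (E - 1))) by (field; lra).
  unfold u_sinh, tanh_half. fold E. rewrite hq, ln_Rinv by lra.
  assert (hl : 0 < ln (1 + 2 / (E - 1))) by (rewrite <- ln_1; apply ln_increasing; lra).
  assert (hln : ln (1 + 2 / (E - 1)) < 2 / (E - 1)).
  { rewrite <- (ln_exp (2 / (E - 1))) at 2. apply ln_increasing; [lra|].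
    apply exp_ineq1. lra. }
  assert (2 / (E - 1) < eta).
  { apply (Rmult_lt_reg_r ((E - 1) / eta)); [apply Rdiv_lt_0_compat; lra|].
    replace (2 / (E - 1) * ((E - 1) / eta)) with (2 / eta) by (field; lra).
    replace (eta * ((E - 1) / eta)) with (E - 1) by (field; lra). lra. }
  rewrite Rabs_Ropp, Rabs_right; lra.
Qed.

Lemma u_exp_vanishes : vanishes_at_infinity u_exp.
Proof.
  intros eta he. exists (1 - ln (eta / 4)). intros b hb.
  assert (h : exp (- b) < eta / 4).
  { rewrite <- (exp_ln (eta / 4)) by lra. apply exp_increasing. lra. }
  pose proof (exp_pos (- b)). unfold u_exp. rewrite Rabs_left; lra.
Qed.

Lemma u_cosh_vanishes : vanishes_at_infinity u_cosh.
Proof.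
  intros eta he. set (e := Rmin eta 1).
  assert (he1 : 0 < e) by (apply Rmin_glb_lt; lra).
  assert (he2 : e <= eta) by apply Rmin_l.
  assert (he3 : e <= 1) by apply Rmin_r.
  pose proof PI2_1.
  assert (ht : 0 < tan (e / 4)) by (apply tan_gt_0; lra).
  exists (1 - ln (tan (e / 4))). intros b hb.
  assert (h : atan (exp (- b)) < e / 4).
  { rewrite <- (atan_tan (e / 4)) by lra. apply atan_increasing.
    rewrite <- (exp_ln (tan (e / 4))) by lra. apply exp_increasing. lra. }
  assert (0 < atan (exp (- b))) by (rewrite <- atan_0; apply atan_increasing, exp_pos).
  unfold u_cosh, parallel_angle. rewrite Rabs_left; lra.
Qed.

Lemma u_coord_sinh_iff r y : 0 < r ->
  improper_int (fun t => / tau 1 t) r (- y) <-> y = u_sinh r.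
Proof.
  intros hr. apply improper_int_primitive_iff; [| |exact u_sinh_vanishes]; intros x hx;
    pose proof (exp_gt_1 x ltac:(lra)).
  - unfold u_sinh, tanh_half. auto_derive.
    + repeat split; try lra. apply Rdiv_lt_0_compat; lra.
    + rewrite tau_sinh. unfold sinh. rewrite exp_Ropp. field. repeat split; nra.
  - apply continuous_inv_tau. rewrite tau_sinh. pose proof (sinh_pos x). lra.
Qed.

Lemma u_coord_exp_iff r y :
  improper_int (fun t => / tau 0 t) r (- y) <-> y = u_exp r.
Proof.
  apply improper_int_primitive_iff; [| |exact u_exp_vanishes]; intros x _;
    pose proof (exp_pos x).
  - unfold u_exp. auto_derive; [easy|]. rewrite tau_exp, exp_Ropp. field. lra.
  - apply continuous_inv_tau. rewrite tau_exp. lra.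
Qed.

Lemma u_coord_cosh_iff r y :
  improper_int (fun t => / tau (-1) t) r (- y) <-> y = u_cosh r.
Proof.
  apply improper_int_primitive_iff; [| |exact u_cosh_vanishes]; intros x _;
    pose proof (exp_pos x).
  - unfold u_cosh, parallel_angle. auto_derive; [easy|].
    rewrite tau_cosh. unfold cosh. rewrite exp_Ropp. field. nra.
  - apply continuous_inv_tau. rewrite tau_cosh. pose proof (cosh_pos x). lra.
Qed.

Lemma range_u_sinh y : y < 0 <-> exists r, 0 < r /\ u_sinh r = y.
Proof.
  split.
  - intros h. set (t := exp y).
    assert (ht0 : 0 < t) by apply exp_pos.
    assert (ht1 : t < 1) by (unfold t; rewrite <- exp_0; apply exp_increasing; lra).
    exists (ln ((1 + t) / (1 - t))). split.
    + rewrite <- ln_1. apply ln_increasing; [lra|].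
      apply (Rmult_lt_reg_r (1 - t)); [lra|]. field_simplify; lra.
    + unfold u_sinh, tanh_half. rewrite exp_ln by (apply Rdiv_lt_0_compat; lra).
      replace (((1 + t) / (1 - t) - 1) / ((1 + t) / (1 - t) + 1)) with t by (field; lra).
      apply ln_exp.
  - intros [r [hr <-]]. destruct (tanh_half_bounds r hr).
    unfold u_sinh. rewrite <- ln_1. apply ln_increasing; lra.
Qed.

Lemma range_u_exp y : y < 0 <-> exists r, u_exp r = y.
Proof.
  split.
  - intros h. exists (- ln (- y / 2)). unfold u_exp.
    rewrite Ropp_involutive, exp_ln by lra. field.
  - intros [r <-]. unfold u_exp. pose proof (exp_pos (- r)). lra.
Qed.

Lemma range_u_cosh y : - (PI / 2) < y < 0 <-> exists r, 0 < r /\ u_cosh r = y.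
Proof.
  split.
  - intros [h1 h2]. pose proof PI2_1.
    assert (hx0 : 0 < tan (- y / 2)) by (apply tan_gt_0; lra).
    assert (hx1 : tan (- y / 2) < 1) by (rewrite <- tan_PI4; apply tan_increasing; lra).
    exists (- ln (tan (- y / 2))). split.
    + assert (ln (tan (- y / 2)) < 0) by (rewrite <- ln_1; apply ln_increasing; lra). lra.
    + unfold u_cosh, parallel_angle. rewrite Ropp_involutive, exp_ln, atan_tan by lra. field.
  - intros [r [hr <-]]. pose proof (parallel_angle_bounds r hr). unfold u_cosh. lra.
Qed.

(** * Minkowski space *)

Lemma mink_comm a b : mink a b = mink b a.
Proof. unfold mink. ring. Qed.

Lemma mink_vadd_l a b c : mink (vadd a b) c = mink a c + mink b c.
Proof. unfold mink, vadd; simpl. ring. Qed.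

Lemma mink_vadd_r a b c : mink c (vadd a b) = mink c a + mink c b.
Proof. unfold mink, vadd; simpl. ring. Qed.

Lemma mink_vscal_l k a c : mink (vscal k a) c = k * mink a c.
Proof. unfold mink, vscal; simpl. ring. Qed.

Lemma mink_vscal_r k a c : mink c (vscal k a) = k * mink c a.
Proof. unfold mink, vscal; simpl. ring. Qed.

Ltac mink_expand := unfold vsub;
  repeat rewrite ?mink_vadd_l, ?mink_vadd_r, ?mink_vscal_l, ?mink_vscal_r.

Ltac mink_expand_in H := unfold vsub in H;
  repeat rewrite ?mink_vadd_l, ?mink_vadd_r, ?mink_vscal_l, ?mink_vscal_r in H.

Definition boost s v :=
  mkV (vx v) (cosh s * vy v + sinh s * vz v) (sinh s * vy v + cosh s * vz v).

Lemma mink_boost s u v : mink (boost s u) (boost s v) = mink u v.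
Proof.
  unfold mink, boost; simpl. pose proof (cosh_sinh_sq s) as h.
  transitivity
    (vx u * vx v + (vy u * vy v - vz u * vz v) * (cosh s * cosh s - sinh s * sinh s));
    [ring|rewrite h; ring].
Qed.

Lemma det3_boost s u v w : det3 (boost s u) (boost s v) (boost s w) = det3 u v w.
Proof.
  unfold det3, boost; simpl. pose proof (cosh_sinh_sq s) as h.
  match goal with |- _ = ?d =>
    transitivity (d * (cosh s * cosh s - sinh s * sinh s)); [ring|rewrite h; ring] end.
Qed.

Lemma edge_ok_of_combination s t v w : 0 < s -> 0 < t ->
  s * s * mink v v + 2 * s * t * mink v w + t * t * mink w w < 0 -> edge_ok v w.
Proof.
  intros hs ht h. exists s, t. repeat split; [lra|lra|].
  mink_expand. rewrite (mink_comm w v). nra.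
Qed.

(* Two hyperideal vertices are joined by a side only if their polars are disjoint. *)
Lemma mink_lt_of_edge_ok a b :
  normed (-1) a -> normed (-1) b -> edge_ok a b -> mink a b < -1.
Proof.
  intros [ha _] [hb _] [s [t [hs [ht h]]]]. mink_expand_in h.
  rewrite (mink_comm b a), ha, hb in h.
  destruct (Rlt_or_le (mink a b) (-1)) as [|hm]; [easy|exfalso].
  assert (0 < s * t) by (apply Rmult_lt_0_compat; lra).
  assert (0 <= s * t * (mink a b + 1)) by (apply Rmult_le_pos; lra).
  assert (0 <= (s - t) * (s - t)) by apply Rle_0_sqr.
  nra.
Qed.

Lemma gtri_intro e1 e2 e3 v1 v2 v3 :
  is_type e1 -> is_type e2 -> is_type e3 ->
  normed e1 v1 -> normed e2 v2 -> normed e3 v3 -> det3 v1 v2 v3 <> 0 ->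
  edge_ok v1 v2 -> edge_ok v1 v3 -> edge_ok v2 v3 ->
  mink v1 v2 < 0 -> mink v1 v3 < 0 -> mink v2 v3 < 0 -> gtri e1 e2 e3 v1 v2 v3.
Proof.
  intros t1 t2 t3 [n1 z1] [n2 z2] [n3 z3] hdet e12 e13 e23 m12 m13 m23.
  unfold gtri, trunc_ok.
  rewrite (mink_comm v2 v1), (mink_comm v3 v1), (mink_comm v3 v2).
  repeat split; auto.
Qed.

Lemma gen_len_cosh e v w l :
  e * e = 1 -> 0 <= l -> cosh l = - mink v w -> gen_len e e v w l.
Proof. intros he hl h. split; [easy|]. rewrite he, tau_cosh. exact h. Qed.

Lemma gen_angle_origin p q r t phi : 0 < p -> 0 < r -> 0 <= phi <= PI ->
  gen_angle 1 (mkV 0 0 1) (mkV p 0 q) (mkV (r * cos phi) (r * sin phi) t) phi.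
Proof.
  intros hp hr hphi. split; [|split; intros; lra]. intros _. cbv zeta. split; [easy|].
  unfold mink, vadd, vscal; simpl. pose proof (sin2_cos2 phi). unfold Rsqr in *.
  match goal with |- cos phi * sqrt ?Q = _ =>
    replace Q with ((p * r) * (p * r)) by nra end.
  rewrite sqrt_square by nra. ring.
Qed.

Lemma third_len_hyperideal_inv delta ri rj phi l :
  third_len (-1) delta ri rj phi l ->
  (delta = 1 /\ phi = PI) \/
  exists a b c, normed (-1) a /\ normed (-1) b /\ normed delta c /\ mink a b < -1 /\
    mink a c = - tau delta ri /\ mink b c = - tau delta rj /\ gen_angle delta c a b phi.
Proof.
  intros [[hd [hp _]]|[a [b [c [G [[_ La] [[_ Lb] [An _]]]]]]]]; [now left|right].
  destruct G as [_ [_ [_ [Na [Nb [Nc [_ [Eab _]]]]]]]].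
  replace (- (-1 * delta)) with delta in La, Lb by ring.
  exists a, b, c.
  split; [|split; [|split; [|split; [|split; [|split]]]]]; try easy; try lra.
  now apply mink_lt_of_edge_ok.
Qed.

(** * Third sides between two hyperideal vertices *)

(* [x c + y a] is where the side from [c] to [a] meets the truncation line [c^perp]. *)
Lemma foot_on_polar c a C S x y :
  normed (-1) c -> normed (-1) a -> mink a c = - C ->
  C * C - S * S = 1 -> 0 < C -> 0 < S ->
  mink (vadd (vscal x c) (vscal y a)) (vadd (vscal x c) (vscal y a)) = -1 ->
  0 < vz (vadd (vscal x c) (vscal y a)) ->
  mink (vadd (vscal x c) (vscal y a)) c = 0 ->
  y * S = 1 /\ x = y * C.
Proof.
  intros [hcc hzc] [haa hza] hac hCS hC hS hff hfz hfc.
  mink_expand_in hff. mink_expand_in hfc. simpl in hfz.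
  rewrite (mink_comm c a), hcc, haa, hac in *.
  assert (hx : x = y * C) by lra. subst x.
  assert (hy : 0 < y).
  { destruct (Rlt_or_le 0 y) as [|hy]; [easy|].
    assert (0 <= - y * (C * vz c + vz a)) by (apply Rmult_le_pos; nra). nra. }
  split; [|easy].
  assert (h1 : (y * S) * (y * S) = 1) by nra.
  assert (0 < y * S) by (apply Rmult_lt_0_compat; lra). nra.
Qed.

Lemma law_cosines_hyperideal_apex ri rj phi l : 0 < ri -> 0 < rj ->
  third_len (-1) (-1) ri rj phi l -> 1 < cosh phi * sinh ri * sinh rj - cosh ri * cosh rj.
Proof.
  intros hri hrj H.
  destruct (third_len_hyperideal_inv _ _ _ _ _ H)
    as [[? _]|[a [b [c [Na [Nb [Nc [hab [hac [hbc An]]]]]]]]]]; [lra|].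
  rewrite tau_cosh in hac, hbc.
  destruct An as [_ [_ An]].
  destruct (An eq_refl) as [xi [yi [xj [yj [fii [fiz [fic [fjj [fjz [fjc [_ hcos]]]]]]]]]]].
  destruct (foot_on_polar c a _ _ xi yi Nc Na hac (cosh_sinh_sq ri) (cosh_pos ri)
              (sinh_pos ri hri) fii fiz fic) as [hyi ->].
  destruct (foot_on_polar c b _ _ xj yj Nc Nb hbc (cosh_sinh_sq rj) (cosh_pos rj)
              (sinh_pos rj hrj) fjj fjz fjc) as [hyj ->].
  mink_expand_in hcos.
  rewrite ?(mink_comm c a), ?(mink_comm c b), ?(mink_comm b a), hac, hbc, (proj1 Nc)
    in hcos.
  assert (e : cosh phi * sinh ri * sinh rj
              = (yi * sinh ri) * (yj * sinh rj) * (cosh ri * cosh rj - mink a b))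
    by (rewrite hcos; ring).
  rewrite hyi, hyj in e. lra.
Qed.

(* Before the boost the apex is [(0,1,0)], which is not normed; boosting by [s < ri, rj]
   makes every [vz] positive. *)
Lemma hyperideal_apex_config ri rj phi : 0 < ri -> 0 < rj -> 0 < phi ->
  exists a b c, normed (-1) a /\ normed (-1) b /\ normed (-1) c /\
    mink a c = - cosh ri /\ mink b c = - cosh rj /\
    mink a b = cosh ri * cosh rj - sinh ri * sinh rj * cosh phi /\ det3 a b c <> 0.
Proof.
  intros hri hrj hphi.
  set (s := Rmin ri rj / 2).
  assert (hs : 0 < s /\ s < ri /\ s < rj).
  { assert (0 < Rmin ri rj) by (apply Rmin_glb_lt; lra).
    pose proof (Rmin_l ri rj). pose proof (Rmin_r ri rj). unfold s. lra. }
  exists (boost s (mkV 0 (- cosh ri) (sinh ri))),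
    (boost s (mkV (sinh rj * sinh phi) (- cosh rj) (sinh rj * cosh phi))),
    (boost s (mkV 0 1 0)).
  unfold normed. rewrite !mink_boost, det3_boost. unfold mink, det3; simpl.
  pose proof (cosh_sinh_sq ri). pose proof (cosh_sinh_sq rj). pose proof (cosh_sinh_sq phi).
  pose proof (sinh_pos ri hri). pose proof (sinh_pos rj hrj). pose proof (sinh_pos phi hphi).
  pose proof (sinh_pos s (proj1 hs)). pose proof (cosh_gt_1 phi hphi). pose proof (cosh_pos s).
  pose proof (sinh_pos (ri - s) ltac:(lra)). pose proof (sinh_pos (rj - s) ltac:(lra)).
  rewrite sinh_minus in *.
  assert (0 < sinh rj * cosh s * (cosh phi - 1))
    by (apply Rmult_lt_0_compat; [apply Rmult_lt_0_compat|]; lra).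
  repeat split; try nra.
  apply Rgt_not_eq. assert (0 < sinh ri * sinh rj) by (apply Rmult_lt_0_compat; lra). nra.
Qed.

Lemma third_len_hyperideal_apex ri rj phi : 0 < ri -> 0 < rj -> 0 < phi ->
  1 < cosh phi * sinh ri * sinh rj - cosh ri * cosh rj ->
  exists l, 0 < l /\ third_len (-1) (-1) ri rj phi l.
Proof.
  intros hri hrj hphi hD.
  destruct (hyperideal_apex_config ri rj phi hri hrj hphi)
    as [a [b [c [Na [Nb [Nc [hac [hbc [hab hdet]]]]]]]]].
  pose proof (cosh_gt_1 ri hri). pose proof (cosh_gt_1 rj hrj).
  pose proof (sinh_pos ri hri). pose proof (sinh_pos rj hrj).
  pose proof (cosh_sinh_sq ri). pose proof (cosh_sinh_sq rj).
  destruct (cosh_surj (- mink a b)) as [l [hl hcl]]; [lra|].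
  exists l. split; [easy|]. right. exists a, b, c.
  destruct Na as [haa hza], Nb as [hbb hzb], Nc as [hcc hzc].
  split; [|split; [|split; [|split]]].
  - apply gtri_intro; try (left; reflexivity); try easy;
      try (apply (edge_ok_of_combination 1 1)); lra.
  - apply gen_len_cosh; lra.
  - apply gen_len_cosh; lra.
  - split; [intros; lra|]. split; [intros; lra|]. intros _.
    exists (cosh ri / sinh ri), (/ sinh ri), (cosh rj / sinh rj), (/ sinh rj). cbv zeta.
    simpl. mink_expand.
    rewrite ?(mink_comm c a), ?(mink_comm c b), ?(mink_comm b a),
      haa, hbb, hcc, hac, hbc, hab.
    repeat split; try (field; lra); try (field_simplify_eq; [nra|lra]); try lra.
    all: apply Rplus_lt_0_compat; apply Rmult_lt_0_compat;
      try apply Rdiv_lt_0_compat; try apply Rinv_0_lt_compat; lra.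
  - apply gen_len_cosh; lra.
Qed.

Lemma hyperideal_apex_condition_iff ri rj phi : 0 < ri -> 0 < rj -> 0 < phi ->
  1 < cosh phi * sinh ri * sinh rj - cosh ri * cosh rj <-> - phi < u_sinh ri + u_sinh rj.
Proof.
  intros hi hj hp.
  pose proof (tanh_half_bounds ri hi). pose proof (tanh_half_bounds rj hj).
  pose proof (exp_gt_1 phi hp).
  assert (hu : - phi < u_sinh ri + u_sinh rj <-> 1 < tanh_half ri * tanh_half rj * exp phi).
  { unfold u_sinh. rewrite <- (exp_ln (tanh_half ri)), <- (exp_ln (tanh_half rj)) by lra.
    rewrite <- !exp_plus, !ln_exp, <- exp_0. split; intros h.
    - apply exp_increasing. lra.
    - apply exp_lt_inv in h. lra. }
  rewrite hu, (sinh_tanh_half ri), (sinh_tanh_half rj), (cosh_tanh_half ri),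
    (cosh_tanh_half rj) by easy.
  unfold cosh at 1. rewrite exp_Ropp.
  set (X := exp phi) in *. set (a := tanh_half ri) in *. set (b := tanh_half rj) in *.
  assert (hab : 0 < a * b < 1) by nra.
  assert (hden : 0 < (1 - a * a) * (1 - b * b) * X)
    by (apply Rmult_lt_0_compat; [apply Rmult_lt_0_compat|]; nra).
  assert (key : (X + / X) / 2 * (2 * a / (1 - a * a)) * (2 * b / (1 - b * b))
                - (1 + a * a) / (1 - a * a) * ((1 + b * b) / (1 - b * b)) - 1
              = 2 * (a * b * X - 1) * (X - a * b) / ((1 - a * a) * (1 - b * b) * X))
    by (field; repeat split; nra).
  assert (hsign : 0 < 2 * (a * b * X - 1) * (X - a * b) / ((1 - a * a) * (1 - b * b) * X)
                  <-> 1 < a * b * X).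
  { split; intros h.
    - apply Rmult_lt_compat_r with (r := (1 - a * a) * (1 - b * b) * X) in h; [|easy].
      field_simplify in h; nra.
    - apply Rdiv_lt_0_compat; nra. }
  lra.
Qed.

(* [x c + y a] is where the side from [c] to [a] crosses the horocycle [<x, c> = -1/2]. *)
Lemma foot_on_horocycle c a r x y :
  normed 0 c -> normed (-1) a -> mink a c = - (exp r / 2) ->
  mink (vadd (vscal x c) (vscal y a)) (vadd (vscal x c) (vscal y a)) = -1 ->
  mink (vadd (vscal x c) (vscal y a)) c = - / 2 ->
  y = exp (- r) /\ x = 1 + y * y.
Proof.
  intros [hcc _] [haa _] hac hhh hhc.
  mink_expand_in hhh. mink_expand_in hhc.
  rewrite (mink_comm c a), hcc, haa, hac in *.
  pose proof (exp_pos r).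
  assert (hy : y = exp (- r)).
  { rewrite exp_Ropp. apply (Rmult_eq_reg_r (exp r)); [|lra]. rewrite Rinv_l; lra. }
  split; [easy|]. rewrite exp_Ropp in hy. subst y.
  match type of hhh with ?e = _ =>
    replace e with (- x + / exp r * / exp r) in hhh by (field; lra) end.
  lra.
Qed.

Lemma law_cosines_ideal_apex ri rj phi l : 0 < phi ->
  third_len (-1) 0 ri rj phi l -> - phi < u_exp ri + u_exp rj.
Proof.
  intros hphi H.
  destruct (third_len_hyperideal_inv _ _ _ _ _ H)
    as [[? _]|[a [b [c [Na [Nb [Nc [hab [hac [hbc An]]]]]]]]]]; [lra|].
  rewrite tau_exp in hac, hbc.
  destruct An as [_ [An _]].
  destruct (An eq_refl) as [xi [yi [xj [yj [hii [_ [hic [hjj [_ [hjc hphi2]]]]]]]]]].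
  destruct (foot_on_horocycle c a ri xi yi Nc Na hac hii hic) as [eyi ->].
  destruct (foot_on_horocycle c b rj xj yj Nc Nb hbc hjj hjc) as [eyj ->].
  assert (0 < yi) by (subst; apply exp_pos).
  assert (0 < yj) by (subst; apply exp_pos).
  rewrite exp_Ropp in eyi, eyj.
  rewrite <- (Rinv_inv (exp ri)), <- eyi in hac.
  rewrite <- (Rinv_inv (exp rj)), <- eyj in hbc.
  mink_expand_in hphi2.
  rewrite ?(mink_comm c a), ?(mink_comm c b), ?(mink_comm b a), hac, hbc,
    (proj1 Na), (proj1 Nb), (proj1 Nc) in hphi2.
  set (Q := yi * yi + yj * yj - 2 * yi * yj * mink a b).
  match type of hphi2 with phi = 2 * sqrt ?E =>
    replace E with Q in hphi2 by (unfold Q; field; split; lra) end.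
  assert (0 < yi * yj * (- 1 - mink a b))
    by (apply Rmult_lt_0_compat; [apply Rmult_lt_0_compat|]; lra).
  assert (hQ : (yi + yj) * (yi + yj) < Q) by (unfold Q; nra).
  assert (hsq : (phi / 2) * (phi / 2) = Q)
    by (rewrite hphi2; transitivity (sqrt Q * sqrt Q); [field|apply sqrt_sqrt; nra]).
  unfold u_exp. rewrite !exp_Ropp, <- eyi, <- eyj. nra.
Qed.

(* With [yi = exp (- ri)]: the horocycle of [c] is [x(t) = h0 + t e + t^2 c] for
   [h0 = (0, lam - mu, lam + mu)], [e = (1,0,0)], and [a], [b] are recovered from its points
   [x(0)], [x(s)] by [x = (1 + y^2) c + y a]. *)
Lemma ideal_apex_config yi yj s : 0 < yi -> 0 < yj -> 0 < s ->
  exists a b c, normed (-1) a /\ normed (-1) b /\ normed 0 c /\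
    mink a c = - / (2 * yi) /\ mink b c = - / (2 * yj) /\
    mink a b = (yi * yi + yj * yj - s * s) / (2 * yi * yj) /\ det3 a b c <> 0.
Proof.
  intros hi hj hs.
  set (lam := / (2 * (yi + yj))). set (mu := (yi + yj) / 2).
  assert (hl : 0 < lam) by (apply Rinv_0_lt_compat; lra).
  assert (hlm : lam * mu = / 4) by (unfold lam, mu; field; lra).
  exists (mkV 0 (- mu / yi - yi * lam) (mu / yi - yi * lam)),
    (mkV (s / yj) (s * s * lam / yj - mu / yj - yj * lam)
         (s * s * lam / yj + mu / yj - yj * lam)),
    (mkV 0 lam lam).
  unfold normed, mink, det3; simpl.
  assert (hvi : yi * lam < mu / yi).
  { apply (Rmult_lt_reg_r (2 * yi * (yi + yj))); [nra|].
    unfold lam, mu. field_simplify; nra. }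
  assert (hvj : yj * lam < mu / yj).
  { apply (Rmult_lt_reg_r (2 * yj * (yi + yj))); [nra|].
    unfold lam, mu. field_simplify; nra. }
  assert (0 <= s * s * lam / yj)
    by (apply Rmult_le_pos; [nra|apply Rlt_le, Rinv_0_lt_compat; lra]).
  repeat split; try lra; try (field_simplify_eq; [nra|lra]).
  apply Rgt_not_eq. field_simplify; [|lra]. apply Rdiv_lt_0_compat; nra.
Qed.

Lemma third_len_ideal_apex ri rj phi : 0 < phi -> - phi < u_exp ri + u_exp rj ->
  exists l, 0 < l /\ third_len (-1) 0 ri rj phi l.
Proof.
  intros hphi hu. unfold u_exp in hu.
  set (yi := exp (- ri)) in *. set (yj := exp (- rj)) in *.
  assert (hi : 0 < yi) by apply exp_pos. assert (hj : 0 < yj) by apply exp_pos.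
  assert (ei : exp ri = / yi) by (unfold yi; rewrite exp_Ropp, Rinv_inv; reflexivity).
  assert (ej : exp rj = / yj) by (unfold yj; rewrite exp_Ropp, Rinv_inv; reflexivity).
  clearbody yi yj.
  destruct (ideal_apex_config yi yj (phi / 2) hi hj ltac:(lra))
    as [a [b [c [[haa hza] [[hbb hzb] [[hcc hzc] [hac [hbc [hab hdet]]]]]]]]].
  assert (hab1 : mink a b < -1).
  { rewrite hab. apply (Rmult_lt_reg_r (2 * yi * yj)); [nra|]. field_simplify; nra. }
  destruct (cosh_surj (- mink a b)) as [l [hl hcl]]; [lra|].
  exists l. split; [easy|]. right. exists a, b, c.
  split; [|split; [|split; [|split]]].
  - apply gtri_intro; try (left; reflexivity); try (right; left; reflexivity);
      try easy; try lra.
    + apply (edge_ok_of_combination 1 1); lra.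
    + apply (edge_ok_of_combination yi (1 + yi * yi)); [lra|nra|].
      rewrite haa, hac, hcc. field_simplify; lra.
    + apply (edge_ok_of_combination yj (1 + yj * yj)); [lra|nra|].
      rewrite hbb, hbc, hcc. field_simplify; lra.
    + rewrite hac. apply Ropp_lt_gt_0_contravar, Rinv_0_lt_compat. lra.
    + rewrite hbc. apply Ropp_lt_gt_0_contravar, Rinv_0_lt_compat. lra.
  - split; [intros; lra|]. replace (- (-1 * 0)) with 0 by ring.
    rewrite tau_exp, hac, ei. field. lra.
  - split; [intros; lra|]. replace (- (-1 * 0)) with 0 by ring.
    rewrite tau_exp, hbc, ej. field. lra.
  - split; [intros; lra|]. split; [|intros; lra]. intros _.
    exists (1 + yi * yi), yi, (1 + yj * yj), yj. cbv zeta. simpl. mink_expand.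
    rewrite ?(mink_comm c a), ?(mink_comm c b), ?(mink_comm b a),
      haa, hbb, hcc, hac, hbc, hab.
    repeat split; try (field; lra); try nra.
    match goal with |- phi = 2 * sqrt ?Q =>
      replace Q with ((phi / 2) * (phi / 2)) by (field; lra) end.
    rewrite sqrt_square by lra. field.
  - apply gen_len_cosh; lra.
Qed.

Lemma law_cosines_finite_apex ri rj phi l : 0 < ri -> 0 < rj ->
  third_len (-1) 1 ri rj phi l -> 1 < sinh ri * sinh rj - cos phi * cosh ri * cosh rj.
Proof.
  intros hri hrj H.
  pose proof (cosh_sinh_sq ri). pose proof (cosh_sinh_sq rj).
  pose proof (cosh_pos ri). pose proof (cosh_pos rj).
  destruct (third_len_hyperideal_inv _ _ _ _ _ H)
    as [[_ ->]|[a [b [c [Na [Nb [Nc [hab [hac [hbc An]]]]]]]]]].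
  - rewrite cos_PI. pose proof (cosh_gt_1 (ri + rj) ltac:(lra)). rewrite cosh_plus in *. lra.
  - rewrite tau_sinh in hac, hbc.
    destruct An as [An _]. destruct (An eq_refl) as [_ hcos]. cbv zeta in hcos.
    mink_expand_in hcos.
    rewrite ?(mink_comm c a), ?(mink_comm c b), ?(mink_comm b a), hac, hbc,
      (proj1 Na), (proj1 Nb), (proj1 Nc) in hcos.
    match type of hcos with cos phi * sqrt ?Q = _ =>
      replace Q with ((cosh ri * cosh rj) * (cosh ri * cosh rj)) in hcos by nra end.
    rewrite sqrt_square in hcos by (apply Rmult_le_pos; lra).
    nra.
Qed.

Lemma third_len_finite_apex ri rj phi : 0 < ri -> 0 < rj -> 0 < phi < PI ->
  1 < sinh ri * sinh rj - cos phi * cosh ri * cosh rj ->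
  exists l, 0 < l /\ third_len (-1) 1 ri rj phi l.
Proof.
  intros hri hrj hphi hD.
  pose proof (cosh_sinh_sq ri). pose proof (cosh_sinh_sq rj).
  pose proof (cosh_gt_1 ri hri). pose proof (cosh_gt_1 rj hrj).
  pose proof (sinh_pos ri hri). pose proof (sinh_pos rj hrj).
  pose proof (sin2_cos2 phi). unfold Rsqr in *.
  pose proof (sin_gt_0 phi (proj1 hphi) (proj2 hphi)).
  set (a := mkV (cosh ri) 0 (sinh ri)).
  set (b := mkV (cosh rj * cos phi) (cosh rj * sin phi) (sinh rj)).
  set (c := mkV 0 0 1).
  assert (hab : mink a b = cos phi * cosh ri * cosh rj - sinh ri * sinh rj)
    by (unfold mink; simpl; ring).
  destruct (cosh_surj (- mink a b)) as [l [hl hcl]]; [lra|].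
  exists l. split; [easy|]. right. exists a, b, c.
  split; [|split; [|split; [|split]]].
  - apply gtri_intro; try (left; reflexivity); try (right; right; reflexivity);
      unfold normed; try (unfold mink; simpl; nra).
    + assert (0 < cosh ri * (cosh rj * sin phi))
        by (apply Rmult_lt_0_compat; [|apply Rmult_lt_0_compat]; lra).
      unfold det3; simpl. lra.
    + apply (edge_ok_of_combination 1 1); [lra|lra|]. unfold mink; simpl. nra.
    + apply (edge_ok_of_combination 1 1); [lra|lra|]. unfold mink; simpl. nra.
    + apply (edge_ok_of_combination 1 1); [lra|lra|]. unfold mink; simpl. nra.
  - split; [intros; lra|]. replace (- (-1 * 1)) with 1 by ring.
    rewrite tau_sinh. unfold mink; simpl. ring.
  - split; [intros; lra|]. replace (- (-1 * 1)) with 1 by ring.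
    rewrite tau_sinh. unfold mink; simpl. ring.
  - apply gen_angle_origin; lra.
  - apply gen_len_cosh; lra.
Qed.

Lemma finite_apex_condition_iff ri rj phi : 0 < ri -> 0 < rj -> 0 < phi <= PI ->
  1 < sinh ri * sinh rj - cos phi * cosh ri * cosh rj <-> - phi < u_cosh ri + u_cosh rj.
Proof.
  intros hi hj hp.
  pose proof (parallel_angle_bounds ri hi). pose proof (parallel_angle_bounds rj hj).
  destruct (parallel_angle_cosh ri) as [ci si], (parallel_angle_cosh rj) as [cj sj].
  pose proof (cosh_pos ri). pose proof (cosh_pos rj).
  set (ti := parallel_angle ri) in *. set (tj := parallel_angle rj) in *.
  assert (key : sinh ri * sinh rj - cos phi * cosh ri * cosh rj - 1
                = cosh ri * cosh rj * (cos (ti + tj) - cos phi)).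
  { assert (e : sin ti * cosh ri * (sin tj * cosh rj) = 1) by (rewrite si, sj; ring).
    rewrite cos_plus, <- ci, <- cj, <- e at 1. ring. }
  assert (hC : 0 < cosh ri * cosh rj) by (apply Rmult_lt_0_compat; lra).
  unfold u_cosh. fold ti tj. split; intros h.
  - assert (0 < cos (ti + tj) - cos phi)
      by (apply (Rmult_lt_reg_l (cosh ri * cosh rj)); lra).
    assert (ti + tj < phi) by (apply (cos_decreasing_0 phi (ti + tj)); lra). lra.
  - assert (cos phi < cos (ti + tj)) by (apply cos_decreasing_1; lra).
    assert (0 < cosh ri * cosh rj * (cos (ti + tj) - cos phi))
      by (apply Rmult_lt_0_compat; lra).
    lra.
Qed.

(** * The set [M] *)

Lemma third_len_obtuse ri rj phi : 0 < ri -> 0 < rj -> PI / 2 <= phi <= PI ->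
  exists l, third_len 1 1 ri rj phi l /\ ri < l /\ rj < l /\ l <= ri + rj.
Proof.
  intros hri hrj hphi.
  destruct (Req_dec phi PI) as [->|hpi].
  { exists (ri + rj). split; [left; auto|lra]. }
  pose proof (cosh_sinh_sq ri). pose proof (cosh_sinh_sq rj).
  pose proof (cosh_gt_1 ri hri). pose proof (cosh_gt_1 rj hrj).
  pose proof (sinh_pos ri hri). pose proof (sinh_pos rj hrj).
  pose proof (sin2_cos2 phi). unfold Rsqr in *. pose proof PI2_1.
  pose proof (sin_gt_0 phi ltac:(lra) ltac:(lra)).
  pose proof (cos_le_0 phi ltac:(lra) ltac:(lra)).
  set (a := mkV (sinh ri) 0 (cosh ri)).
  set (b := mkV (sinh rj * cos phi) (sinh rj * sin phi) (cosh rj)).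
  set (c := mkV 0 0 1).
  assert (hab : mink a b = cos phi * sinh ri * sinh rj - cosh ri * cosh rj)
    by (unfold mink; simpl; ring).
  assert (hSS : 0 < sinh ri * sinh rj) by (apply Rmult_lt_0_compat; lra).
  assert (hlo : cosh ri * cosh rj <= - mink a b) by (rewrite hab; nra).
  assert (hhi : - mink a b <= cosh (ri + rj)) by (rewrite hab, cosh_plus; nra).
  destruct (cosh_surj (- mink a b)) as [l [hl hcl]]; [nra|].
  exists l. split; [|split; [|split]].
  - right. exists a, b, c. split; [|split; [|split; [|split]]].
    + apply gtri_intro; try (right; right; reflexivity);
        unfold normed; try (unfold mink; simpl; nra).
      * assert (0 < sinh ri * (sinh rj * sin phi))
          by (apply Rmult_lt_0_compat; [|apply Rmult_lt_0_compat]; lra).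
        unfold det3; simpl. lra.
      * apply (edge_ok_of_combination 1 1); [lra|lra|]. unfold mink; simpl. nra.
      * apply (edge_ok_of_combination 1 1); [lra|lra|]. unfold mink; simpl. nra.
      * apply (edge_ok_of_combination 1 1); [lra|lra|]. unfold mink; simpl. nra.
    + apply gen_len_cosh; [ring|lra|]. unfold mink; simpl. ring.
    + apply gen_len_cosh; [ring|lra|]. unfold mink; simpl. ring.
    + apply gen_angle_origin; lra.
    + apply gen_len_cosh; [ring|lra|lra].
  - apply cosh_lt_inv; nra.
  - apply cosh_lt_inv; nra.
  - apply cosh_le_inv; lra.
Qed.

(* [v1], [v2] are placed symmetrically in the plane [y = 0]; then [v3] is determined by
   its two pairings, and its [y]-coordinate is fixed by [mink v3 v3 = 1]. *)
Lemma hyperideal_triangle_exists c1 c2 c3 : 1 < c1 -> 1 < c2 -> 1 < c3 ->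
  exists v1 v2 v3, gtri (-1) (-1) (-1) v1 v2 v3 /\
    mink v2 v3 = - c1 /\ mink v1 v3 = - c2 /\ mink v1 v2 = - c3.
Proof.
  intros h1 h2 h3.
  destruct (sqrt_spec ((c3 + 1) / 2)) as [hX eX]; [lra|].
  destruct (sqrt_spec ((c3 - 1) / 2)) as [hZ eZ]; [lra|].
  set (X := sqrt ((c3 + 1) / 2)) in *. set (Z := sqrt ((c3 - 1) / 2)) in *.
  clearbody X Z.
  set (p := (c1 - c2) / (2 * X)). set (w := (c1 + c2) / (2 * Z)).
  assert (ep : p * X = (c1 - c2) / 2) by (unfold p; field; lra).
  assert (ew : w * Z = (c1 + c2) / 2) by (unfold w; field; lra).
  assert (hw : 0 < w) by (unfold w; apply Rdiv_lt_0_compat; lra).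
  assert (hpw : p * p < w * w).
  { assert ((p * X) * (p * X) < (w * Z) * (w * Z)) by (rewrite ep, ew; nra).
    assert (w * w * (Z * Z) < w * w * (X * X)) by (apply Rmult_lt_compat_l; nra).
    apply (Rmult_lt_reg_r (X * X)); nra. }
  destruct (sqrt_spec (1 + w * w - p * p)) as [hq eq]; [lra|].
  set (q := sqrt (1 + w * w - p * p)) in *. clearbody q.
  exists (mkV X 0 Z), (mkV (- X) 0 Z), (mkV p q w).
  split; [|unfold mink; simpl; repeat split; lra].
  apply gtri_intro; try (left; reflexivity); unfold normed, mink; simpl; try lra.
  - unfold det3; simpl. assert (0 < X * Z * q) by (repeat apply Rmult_lt_0_compat; lra).
    lra.
  - apply (edge_ok_of_combination 1 1); unfold mink; simpl; lra.
  - apply (edge_ok_of_combination 1 1); unfold mink; simpl; lra.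
  - apply (edge_ok_of_combination 1 1); unfold mink; simpl; lra.
Qed.

Lemma finite_triangle_exists l1 l2 l3 : 0 < l1 -> 0 < l2 -> 0 < l3 ->
  l1 < l2 + l3 -> l2 < l1 + l3 -> l3 < l1 + l2 ->
  exists v1 v2 v3, gtri 1 1 1 v1 v2 v3 /\
    mink v2 v3 = - cosh l1 /\ mink v1 v3 = - cosh l2 /\ mink v1 v2 = - cosh l3.
Proof.
  intros h1 h2 h3 t1 t2 t3.
  assert (u1 : cosh l1 < cosh l2 * cosh l3 + sinh l2 * sinh l3)
    by (rewrite <- cosh_plus; apply cosh_lt; lra).
  assert (u2 : cosh l2 * cosh l3 - sinh l2 * sinh l3 < cosh l1).
  { destruct (Rle_or_lt l3 l2).
    - rewrite <- cosh_minus. apply cosh_lt; lra.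
    - rewrite (Rmult_comm (cosh l2)), (Rmult_comm (sinh l2)), <- cosh_minus.
      apply cosh_lt; lra. }
  pose proof (cosh_sinh_sq l2). pose proof (cosh_sinh_sq l3).
  pose proof (sinh_pos l2 h2). pose proof (sinh_pos l3 h3).
  pose proof (cosh_gt_1 l1 h1). pose proof (cosh_gt_1 l2 h2). pose proof (cosh_gt_1 l3 h3).
  set (x := (cosh l2 * cosh l3 - cosh l1) / sinh l3).
  assert (ex : x * sinh l3 = cosh l2 * cosh l3 - cosh l1) by (unfold x; field; lra).
  assert (hx : x * x < sinh l2 * sinh l2).
  { assert ((x * sinh l3) * (x * sinh l3) < (sinh l2 * sinh l3) * (sinh l2 * sinh l3))
      by (rewrite ex; nra).
    nra. }
  destruct (sqrt_spec (sinh l2 * sinh l2 - x * x)) as [hy ey]; [lra|].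
  set (y := sqrt (sinh l2 * sinh l2 - x * x)) in *. clearbody x y.
  exists (mkV 0 0 1), (mkV (sinh l3) 0 (cosh l3)), (mkV x y (cosh l2)).
  split; [|unfold mink; simpl; repeat split; lra].
  apply gtri_intro; try (right; right; reflexivity); unfold normed, mink; simpl; try lra.
  - unfold det3; simpl. assert (0 < sinh l3 * y) by (apply Rmult_lt_0_compat; lra). lra.
  - apply (edge_ok_of_combination 1 1); unfold mink; simpl; lra.
  - apply (edge_ok_of_combination 1 1); unfold mink; simpl; lra.
  - apply (edge_ok_of_combination 1 1); unfold mink; simpl; lra.
Qed.

Lemma inJ_nonzero s r : s <> 0 -> inJ s r <-> 0 < r.
Proof. unfold inJ. split; auto. Qed.

Definition angle_inequalities (p1 p2 p3 y1 y2 y3 : R) : Prop :=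
  - p1 < y2 + y3 /\ - p2 < y1 + y3 /\ - p3 < y1 + y2.

Lemma Mset_hyperideal_iff delta p1 p2 p3 (dom : R -> Prop) (G : R -> R) :
  inI delta p1 -> inI delta p2 -> inI delta p3 ->
  (forall r, inJ (-1 * delta) r <-> dom r) ->
  (forall ri rj phi l, inI delta phi -> dom ri -> dom rj ->
     third_len (-1) delta ri rj phi l -> - phi < G ri + G rj) ->
  (forall ri rj phi, inI delta phi -> dom ri -> dom rj -> - phi < G ri + G rj ->
     exists l, 0 < l /\ third_len (-1) delta ri rj phi l) ->
  forall r1 r2 r3, Mset (-1) delta p1 p2 p3 r1 r2 r3 <->
    dom r1 /\ dom r2 /\ dom r3 /\ angle_inequalities p1 p2 p3 (G r1) (G r2) (G r3).
Proof.
  intros hp1 hp2 hp3 HJ Hnec Hsuf r1 r2 r3. unfold angle_inequalities. split.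
  - intros [j1 [j2 [j3 [l1 [l2 [l3 [t1 [t2 [t3 _]]]]]]]]].
    apply HJ in j1, j2, j3. repeat split; auto; eapply Hnec; eauto.
  - intros [d1 [d2 [d3 [k1 [k2 k3]]]]].
    destruct (Hsuf r2 r3 p1 hp1 d2 d3 k1) as [l1 [hl1 t1]].
    destruct (Hsuf r1 r3 p2 hp2 d1 d3 k2) as [l2 [hl2 t2]].
    destruct (Hsuf r1 r2 p3 hp3 d1 d2 k3) as [l3 [hl3 t3]].
    destruct (hyperideal_triangle_exists (cosh l1) (cosh l2) (cosh l3))
      as [v1 [v2 [v3 [G123 [e1 [e2 e3]]]]]]; try (apply cosh_gt_1; easy).
    repeat split; try (apply HJ; easy).
    exists l1, l2, l3. repeat split; try easy.
    exists v1, v2, v3. split; [exact G123|]. split; [|split]; apply gen_len_cosh; lra.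
Qed.

Lemma Mset_finite_obtuse_iff p1 p2 p3 :
  PI / 2 <= p1 <= PI -> PI / 2 <= p2 <= PI -> PI / 2 <= p3 <= PI ->
  forall r1 r2 r3, Mset 1 1 p1 p2 p3 r1 r2 r3 <-> 0 < r1 /\ 0 < r2 /\ 0 < r3.
Proof.
  intros hp1 hp2 hp3 r1 r2 r3.
  unfold Mset. rewrite !(inJ_nonzero (1 * 1)) by lra. split; [tauto|]. intros [d1 [d2 d3]].
  destruct (third_len_obtuse r2 r3 p1 d2 d3 hp1) as [l1 [t1 [a1 [b1 c1]]]].
  destruct (third_len_obtuse r1 r3 p2 d1 d3 hp2) as [l2 [t2 [a2 [b2 c2]]]].
  destruct (third_len_obtuse r1 r2 p3 d1 d2 hp3) as [l3 [t3 [a3 [b3 c3]]]].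
  destruct (finite_triangle_exists l1 l2 l3)
    as [v1 [v2 [v3 [G123 [e1 [e2 e3]]]]]]; try lra.
  repeat split; try easy.
  exists l1, l2, l3. repeat split; try easy.
  exists v1, v2, v3. split; [exact G123|]. split; [|split]; apply gen_len_cosh; lra.
Qed.

(** * The image of [u] *)

Lemma u_image_iff eps delta p1 p2 p3 (dom : R -> Prop) (G : R -> R) (P : R -> Prop)
    (C : R -> R -> R -> Prop) :
  (forall r1 r2 r3, Mset eps delta p1 p2 p3 r1 r2 r3 <->
     dom r1 /\ dom r2 /\ dom r3 /\ C (G r1) (G r2) (G r3)) ->
  (forall r y, dom r -> u_coord eps delta r y <-> y = G r) ->
  (forall y, P y <-> exists r, dom r /\ G r = y) ->
  forall y, u_image eps delta p1 p2 p3 y <->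
    P (vx y) /\ P (vy y) /\ P (vz y) /\ C (vx y) (vy y) (vz y).
Proof.
  intros HM HU HP y. split.
  - intros [r1 [r2 [r3 [M [u1 [u2 u3]]]]]].
    apply HM in M as [d1 [d2 [d3 c]]].
    apply (HU _ _ d1) in u1. apply (HU _ _ d2) in u2. apply (HU _ _ d3) in u3.
    rewrite u1, u2, u3, !HP. repeat split; eauto.
  - rewrite !HP. intros [[r1 [d1 e1]] [[r2 [d2 e2]] [[r3 [d3 e3]] c]]].
    exists r1, r2, r3. rewrite HM, !HU, e1, e2, e3 by easy. repeat split; easy.
Qed.

Definition in_halfspaces (hs : list (V3 * R)) (y : V3) : Prop :=
  List.Forall (fun h => dot3 (fst h) y < snd h) hs.

Lemma open_convex_polyhedron_intro (S : V3 -> Prop) hs :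
  (forall y, S y <-> in_halfspaces hs y) -> open_convex_polyhedron S.
Proof. intros H. exists hs. exact H. Qed.

Lemma in_halfspaces_app hs1 hs2 y :
  in_halfspaces (hs1 ++ hs2) y <-> in_halfspaces hs1 y /\ in_halfspaces hs2 y.
Proof. apply List.Forall_app. Qed.

Definition orthant_halfspaces : list (V3 * R) :=
  (mkV 1 0 0, 0) :: (mkV 0 1 0, 0) :: (mkV 0 0 1, 0) :: nil.

Definition lower_halfspaces (m : R) : list (V3 * R) :=
  (mkV (-1) 0 0, m) :: (mkV 0 (-1) 0, m) :: (mkV 0 0 (-1), m) :: nil.

Definition angle_halfspaces (p1 p2 p3 : R) : list (V3 * R) :=
  (mkV 0 (-1) (-1), p1) :: (mkV (-1) 0 (-1), p2) :: (mkV (-1) (-1) 0, p3) :: nil.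

Lemma in_orthant_halfspaces y :
  in_halfspaces orthant_halfspaces y <-> vx y < 0 /\ vy y < 0 /\ vz y < 0.
Proof.
  unfold in_halfspaces, orthant_halfspaces, dot3. rewrite !List.Forall_cons_iff. simpl.
  split; [intros (? & ? & ? & _)|intros (? & ? & ?)]; repeat split; auto; lra.
Qed.

Lemma in_lower_halfspaces m y :
  in_halfspaces (lower_halfspaces m) y <-> - m < vx y /\ - m < vy y /\ - m < vz y.
Proof.
  unfold in_halfspaces, lower_halfspaces, dot3. rewrite !List.Forall_cons_iff. simpl.
  split; [intros (? & ? & ? & _)|intros (? & ? & ?)]; repeat split; auto; lra.
Qed.

Lemma in_angle_halfspaces p1 p2 p3 y :
  in_halfspaces (angle_halfspaces p1 p2 p3) y <->
  angle_inequalities p1 p2 p3 (vx y) (vy y) (vz y).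
Proof.
  unfold in_halfspaces, angle_halfspaces, angle_inequalities, dot3.
  rewrite !List.Forall_cons_iff. simpl.
  split; [intros (? & ? & ? & _)|intros (? & ? & ?)]; repeat split; auto; lra.
Qed.

Lemma polyhedron_hyperideal_hyperideal p1 p2 p3 :
  inI (-1) p1 -> inI (-1) p2 -> inI (-1) p3 ->
  open_convex_polyhedron (u_image (-1) (-1) p1 p2 p3).
Proof.
  intros h1 h2 h3.
  apply (open_convex_polyhedron_intro _ (orthant_halfspaces ++ angle_halfspaces p1 p2 p3)).
  intros y. rewrite in_halfspaces_app, in_orthant_halfspaces, in_angle_halfspaces.
  rewrite (u_image_iff _ _ _ _ _ (fun r => 0 < r) u_sinh (fun y => y < 0)
    (angle_inequalities p1 p2 p3)); [tauto| | |].
  - apply Mset_hyperideal_iff; try easy.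
    + intros r. apply inJ_nonzero. lra.
    + intros ri rj phi l [hphi _] hi hj H.
      apply hyperideal_apex_condition_iff, (law_cosines_hyperideal_apex _ _ _ l); easy.
    + intros ri rj phi [hphi _] hi hj hu.
      apply third_len_hyperideal_apex, hyperideal_apex_condition_iff; easy.
  - intros r y0 hr. unfold u_coord. replace (-1 * -1) with 1 by ring.
    now apply u_coord_sinh_iff.
  - exact range_u_sinh.
Qed.

Lemma polyhedron_hyperideal_ideal p1 p2 p3 :
  inI 0 p1 -> inI 0 p2 -> inI 0 p3 ->
  open_convex_polyhedron (u_image (-1) 0 p1 p2 p3).
Proof.
  intros h1 h2 h3.
  apply (open_convex_polyhedron_intro _ (orthant_halfspaces ++ angle_halfspaces p1 p2 p3)).
  intros y. rewrite in_halfspaces_app, in_orthant_halfspaces, in_angle_halfspaces.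
  rewrite (u_image_iff _ _ _ _ _ (fun _ => True) u_exp (fun y => y < 0)
    (angle_inequalities p1 p2 p3)); [tauto| | |].
  - apply Mset_hyperideal_iff; try easy.
    + intros r. unfold inJ. split; [easy|]. intros _ h. contradict h. ring.
    + intros ri rj phi l [hphi _] _ _. apply law_cosines_ideal_apex. easy.
    + intros ri rj phi [hphi _] _ _. apply third_len_ideal_apex. easy.
  - intros r y0 _. unfold u_coord. replace (-1 * 0) with 0 by ring. apply u_coord_exp_iff.
  - intros y0. rewrite range_u_exp. firstorder.
Qed.

Lemma polyhedron_hyperideal_finite p1 p2 p3 :
  inI 1 p1 -> inI 1 p2 -> inI 1 p3 ->
  open_convex_polyhedron (u_image (-1) 1 p1 p2 p3).
Proof.
  intros h1 h2 h3.
  apply (open_convex_polyhedron_intro _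
    (lower_halfspaces (PI / 2) ++ orthant_halfspaces ++ angle_halfspaces p1 p2 p3)).
  intros y.
  rewrite !in_halfspaces_app, in_lower_halfspaces, in_orthant_halfspaces, in_angle_halfspaces.
  rewrite (u_image_iff _ _ _ _ _ (fun r => 0 < r) u_cosh (fun y => - (PI / 2) < y < 0)
    (angle_inequalities p1 p2 p3)); [tauto| | |].
  - apply Mset_hyperideal_iff; try easy.
    + intros r. apply inJ_nonzero. lra.
    + intros ri rj phi l [hp hpi] hi hj H. specialize (hpi eq_refl).
      apply finite_apex_condition_iff, (law_cosines_finite_apex _ _ _ l); easy.
    + intros ri rj phi [hp hpi] hi hj hu. specialize (hpi eq_refl).
      destruct (Req_dec phi PI) as [->|hne].
      * exists (ri + rj). split; [lra|]. left. easy.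
      * apply third_len_finite_apex; [easy|easy|lra|].
        apply finite_apex_condition_iff; easy.
  - intros r y0 hr. unfold u_coord. replace (-1 * 1) with (-1) by ring. apply u_coord_cosh_iff.
  - exact range_u_cosh.
Qed.

Lemma polyhedron_finite_obtuse p1 p2 p3 :
  PI / 2 <= p1 <= PI -> PI / 2 <= p2 <= PI -> PI / 2 <= p3 <= PI ->
  open_convex_polyhedron (u_image 1 1 p1 p2 p3).
Proof.
  intros h1 h2 h3.
  apply (open_convex_polyhedron_intro _ orthant_halfspaces). intros y.
  rewrite in_orthant_halfspaces.
  rewrite (u_image_iff _ _ _ _ _ (fun r => 0 < r) u_sinh (fun y => y < 0) (fun _ _ _ => True));
    [tauto| | |].
  - intros r1 r2 r3. rewrite Mset_finite_obtuse_iff by easy. tauto.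
  - intros r y0 hr. unfold u_coord. replace (1 * 1) with 1 by ring. now apply u_coord_sinh_iff.
  - exact range_u_sinh.
Qed.

Theorem lemma4p2 (eps delta phi1 phi2 phi3 : R)
  (Htypes : is_type eps /\ is_type delta)
  (Hphi : inI delta phi1 /\ inI delta phi2 /\ inI delta phi3)
  (Hcase : eps = -1 \/
           (eps = 1 /\ delta = 1 /\
            PI / 2 <= phi1 /\ PI / 2 <= phi2 /\ PI / 2 <= phi3)) :
  open_convex_polyhedron (u_image eps delta phi1 phi2 phi3).
Proof.
  destruct Htypes as [_ Hdelta], Hphi as [h1 [h2 h3]].
  destruct Hcase as [He | [He [Hd [q1 [q2 q3]]]]]; subst eps.
  - destruct Hdelta as [Hd|[Hd|Hd]]; subst delta.
    + now apply polyhedron_hyperideal_hyperideal.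
    + now apply polyhedron_hyperideal_ideal.
    + now apply polyhedron_hyperideal_finite.
  - subst delta. destruct h1 as [_ h1], h2 as [_ h2], h3 as [_ h3].
    apply polyhedron_finite_obtuse; split; auto.
Qed.
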